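(* Let $q\ge2$ be a prime power, $d\ge6$ and $1\le j\le d$. (i) $|Q_j(i)|>|Q_j(i+1)|$ for all $0\le i\le d-1$, except possibly when $q=2$, $i=d-1$, and ($j=d$ or $j$ is even). (ii) If $j$ is odd, then $Q_j(1)\le Q_j(i)$ for all $0\le i\le d$. (iii) If $j$ is even, then $Q_j(d-j+2)\le Q_j(i)$ for all $0\le i\le d$. (iv) $|Q_j(1)|>|Q_j(i)|$ for all $2\le i\le d$.
   Context: Let $b=-q$. For integers $m\ge0$ and $l$, ${m\brack l}_b=\prod_{t=1}^{l}\frac{b^{m-t+1}-1}{b^t-1}$ for $l\ge0$ and $0$ for $l<0$. The Hermitian forms graph $Q_q(d,j)$ has as vertices the $d\times d$ Hermitian matrices over $\mathbb F_{q^2}$, two being adjacent iff their difference has rank $j$. Its eigenvalues are $Q_j(i)$, $0\le i\le d$, where $$Q_j(i)=(-1)^j\sum_{h=0}^{\min\{j,d-i\}}(-q)^{\binom{j-h}{2}+hd}{d-h\brack d-j}_b{d-i\brack h}_b;$$ $Q_j(0)$ is the degree (largest eigenvalue) of $Q_q(d,j)$. *)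

From mathcomp Require Import all_boot all_order all_algebra.
Set Implicit Arguments. Unset Strict Implicit. Unset Printing Implicit Defensive.
Import Order.TTheory GRing.Theory Num.Theory.
Local Open Scope ring_scope.

Definition gbin (b : rat) (m l : nat) : rat :=
  \prod_(1 <= t < l.+1) ((b ^+ (m - t + 1)%N - 1) / (b ^+ t - 1)).

(* Eigenvalue Q_j(i) of the Hermitian forms graph Q_q(d, j), with b = -q. *)
Definition Qeig (q d j i : nat) : rat :=
  let b : rat := - (q%:R) in
  (-1) ^+ j *
  \sum_(0 <= h < (minn j (d - i)).+1)
     b ^+ ('C(j - h, 2) + h * d)%N * gbin b (d - h) (d - j) * gbin b (d - i) h.

Definition prime_power (q : nat) : Prop :=
  exists p k : nat, prime p /\ (0 < k)%N /\ q = (p ^ k)%N.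

From mathcomp Require Import all_boot all_order all_algebra zify ring lra.
Import Order.TTheory GRing.Theory Num.Theory.
Set Implicit Arguments. Unset Strict Implicit. Unset Printing Implicit Defensive.
Local Open Scope ring_scope.

(* Put [b = -q], [m = d - j], [n = d - i] and [G b m j n = Q_j(i)].  The
   q-Pascal rule for the Gaussian binomials gives a three-term recurrence
   [G m (j+1) (n+1) = G m (j+1) n - b^(m+j+1+n) G m j n] (lemma [G_rec]);
   on the ratios [rho m j n = G m j (n+1) / G m j n] it becomes
   [rho m (j+1) (n+1) = 1 + b rho m j n (rho m (j+1) n - 1) / rho m (j+1) n].
   The boundary ratios [rho m (j+1) 0] have an explicit form [r0]; for
   [q >= 2] they are negative and mostly below [-1], which starts an
   induction showing that every ratio with [j, n >= 1] is larger than [2]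
   or smaller than [-1], on a side given by the parities of [j] and [n]
   ([ratio_separated]).  Hence [|Q_j(i)|] strictly decreases in [i] except
   possibly at the last step, and the signs of consecutive eigenvalues are
   known; together with the positivity of the degree [Q_j(0)] this
   locates the smallest eigenvalue. *)

Definition gnum (b : rat) (N k : nat) : rat :=
  \prod_(1 <= t < k.+1) (b ^+ (N - t + 1) - 1).
Definition gden (b : rat) (k : nat) : rat :=
  \prod_(1 <= t < k.+1) (b ^+ t - 1).

Lemma gbinE b N k : gbin b N k = gnum b N k / gden b k.
Proof. by rewrite /gbin /gnum /gden prodf_div. Qed.

Lemma gbin0 b N : gbin b N 0 = 1.
Proof. by rewrite /gbin big_geq. Qed.

Lemma gnumSr b N k : (k < N)%N -> gnum b N k.+1 = gnum b N k * (b ^+ (N - k) - 1).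
Proof.
move=> hk; rewrite /gnum big_nat_recr //=.
by have -> : (N - k.+1 + 1 = N - k)%N by lia.
Qed.

Lemma gnumSl b N k : gnum b N.+1 k.+1 = (b ^+ N.+1 - 1) * gnum b N k.
Proof. by rewrite /gnum big_nat_recl //= subn1 addn1. Qed.

Lemma gdenS b k : gden b k.+1 = gden b k * (b ^+ k.+1 - 1).
Proof. by rewrite /gden big_nat_recr. Qed.

Lemma gnum_diag b N : gnum b N N = gden b N.
Proof.
elim: N => [|N IH]; first by rewrite /gnum /gden !big_geq.
by rewrite gnumSl IH gdenS mulrC.
Qed.

Lemma gbin_top_succ b m j :
  gbin b (m + j).+1 m * (b ^+ j.+1 - 1) = gbin b (m + j) m * (b ^+ (m + j).+1 - 1).
Proof.
case: m => [|k]; first by rewrite !gbin0.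
rewrite !gbinE gnumSl gnumSr; last by lia.
have -> : (k.+1 + j - k = j.+1)%N by lia.
by rewrite addSn; ring.
Qed.

Section GaussianBinomial.
Variable b : rat.
Hypothesis b_not_root : forall t, (0 < t)%N -> b ^+ t - 1 != 0.

Lemma gden_neq0 k : gden b k != 0.
Proof.
elim: k => [|k IH]; first by rewrite /gden big_geq ?oner_neq0.
by rewrite gdenS mulf_neq0 // b_not_root.
Qed.

Lemma gnum_neq0 N k : gnum b N k != 0.
Proof. by rewrite /gnum prodf_seq_neq0; apply/allP => t _ /=; apply: b_not_root; lia. Qed.

Lemma gbin_neq0 N k : gbin b N k != 0.
Proof. by rewrite gbinE mulf_neq0 ?invr_eq0 ?gnum_neq0 ?gden_neq0. Qed.

Lemma gbin_diag N : gbin b N N = 1.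
Proof. by rewrite gbinE gnum_diag divff // gden_neq0. Qed.

Lemma gbin_pascal N h : (h < N)%N ->
  gbin b N.+1 h.+1 = gbin b N h.+1 + b ^+ (N - h) * gbin b N h.
Proof.
move=> hh; rewrite !gbinE gnumSl gnumSr // gdenS.
have hD := gden_neq0 h; have hD1 : b ^+ h.+1 - 1 != 0 by apply: b_not_root.
have -> : b ^+ N.+1 = b ^+ (N - h) * b ^+ h.+1 by rewrite -exprD; congr (_ ^+ _); lia.
by field; rewrite hD hD1.
Qed.

End GaussianBinomial.

(* [gb b n h] is the Gaussian binomial [n brack h]_b, extended by zero for
   [h > n]; this lets all sums below run over the full range [0 <= h <= j]. *)
Definition gb (b : rat) (n h : nat) : rat := if (h <= n)%N then gbin b n h else 0.

Definition G (b : rat) (m j n : nat) : rat :=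
  (-1) ^+ j * \sum_(0 <= h < j.+1)
     b ^+ ('C(j - h, 2) + h * (m + j)) * gbin b (m + j - h) m * gb b n h.

Lemma Qeig_G q d j i : (j <= d)%N -> Qeig q d j i = G (- q%:R) (d - j) j (d - i).
Proof.
move=> hjd; rewrite /Qeig /G subnK //; congr (_ * _).
have hmin : ((minn j (d - i)).+1 <= j.+1)%N by rewrite ltnS geq_minl.
rewrite [RHS](big_cat_nat (leq0n _) hmin) /= [X in _ = _ + X]big1_seq ?addr0.
  by apply: eq_big_nat => h /andP[_ hh]; rewrite /gb ifT //; lia.
move=> h /andP[_]; rewrite mem_index_iota => /andP[h1 h2].
by rewrite /gb ifF ?mulr0 //; apply/negbTE; rewrite -ltnNge; lia.
Qed.

Definition rho (b : rat) (m j n : nat) : rat := G b m j n.+1 / G b m j n.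

Lemma G_succ b m j n : G b m j n != 0 -> G b m j n.+1 = rho b m j n * G b m j n.
Proof. by move=> h; rewrite /rho mulfVK. Qed.

(* The explicit value of [rho b m k 0], for [k >= 1] (lemma [rho_n0]). *)
Definition r0 (b : rat) (m k : nat) : rat :=
  1 + b ^+ m.+1 * (b ^+ k - 1) / (b ^+ (m + k) - 1).

Section Recurrence.
Variable b : rat.
Hypothesis b_not_root : forall t, (0 < t)%N -> b ^+ t - 1 != 0.
Hypothesis b_neq0 : b != 0.

Lemma gb0 n : gb b n 0 = 1.
Proof. by rewrite /gb leq0n gbin0. Qed.

Lemma gb_pascal n h : gb b n.+1 h.+1 = gb b n h.+1 + b ^+ (n - h) * gb b n h.
Proof.
rewrite /gb; case: (ltngtP h n) => hn.
- by rewrite ltnS (ltnW hn); apply: gbin_pascal.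
- by rewrite ltnNge hn /= mulr0 addr0.
- by subst h; rewrite ltnSn subnn expr0 mul1r add0r !gbin_diag.
Qed.

Lemma G_rec m j n :
  G b m j.+1 n.+1 = G b m j.+1 n - b ^+ (m + j.+1 + n) * G b m j n.
Proof.
set c := fun h => b ^+ ('C(j.+1 - h, 2) + h * (m + j.+1)) * gbin b (m + j.+1 - h) m.
set T := fun h => b ^+ ('C(j - h, 2) + h * (m + j)) * gbin b (m + j - h) m * gb b n h.
suff key : \sum_(0 <= h < j.+2) c h * gb b n.+1 h =
   \sum_(0 <= h < j.+2) c h * gb b n h + b ^+ (m + j.+1 + n) * \sum_(0 <= h < j.+1) T h.
  by rewrite /G -/c -/T key exprS; ring.
rewrite big_nat_recl // [in RHS]big_nat_recl // !gb0 -addrA; congr (_ + _).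
rewrite mulr_sumr -big_split /=; apply: eq_bigr => h _.
rewrite gb_pascal mulrDr; congr (_ + _).
rewrite /c /T /gb; case: (leqP h n) => hhn; last by rewrite !mulr0.
have -> : (m + j.+1 - h.+1 = m + j - h)%N by lia.
have -> : (j.+1 - h.+1 = j - h)%N by lia.
have E : ('C(j - h, 2) + h.+1 * (m + j.+1) + (n - h)
          = m + j.+1 + n + ('C(j - h, 2) + h * (m + j)))%N by nia.
by rewrite !mulrA -exprD -E !exprD; ring.
Qed.

Lemma G_j0 m n : G b m 0 n = 1.
Proof. by rewrite /G big_nat1 !addn0 !subn0 gbin_diag // gb0 bin0n !mulr1. Qed.

Lemma G_n0 m j : G b m j 0 = (-1) ^+ j * b ^+ 'C(j, 2) * gbin b (m + j) m.
Proof.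
rewrite /G big_nat_recl // big1 ?addr0; last by move=> h _; rewrite /gb /= mulr0.
by rewrite gb0 mulr1 subn0 mul0n addn0 subn0 mulrA.
Qed.

Lemma G_n0_neq0 m j : G b m j 0 != 0.
Proof. by rewrite G_n0 !mulf_neq0 ?gbin_neq0 ?expf_neq0 ?signr_eq0. Qed.

Lemma G_n0_succ m j :
  G b m j.+1 0 * (b ^+ j.+1 - 1) = - b ^+ j * (b ^+ (m + j).+1 - 1) * G b m j 0.
Proof.
rewrite !G_n0 binS bin1 exprD addnS.
have e := gbin_top_succ b m j.
transitivity ((-1) * (-1) ^+ j * (b ^+ 'C(j, 2) * b ^+ j)
               * (gbin b (m + j).+1 m * (b ^+ j.+1 - 1))); first by rewrite exprS; ring.
by rewrite e; ring.
Qed.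

Lemma rho_n0 m j : rho b m j.+1 0 = r0 b m j.+1.
Proof.
have hG := G_n0_neq0 m j.
have hd : b ^+ j.+1 - 1 != 0 by apply: b_not_root.
have hd2 : b ^+ (m + j).+1 - 1 != 0 by apply: b_not_root.
have hbj : b ^+ j != 0 by rewrite expf_neq0.
have e : G b m j 0 = - G b m j.+1 0 * (b ^+ j.+1 - 1) / (b ^+ j * (b ^+ (m + j).+1 - 1)).
  by rewrite mulNr G_n0_succ; field; rewrite hbj hd2.
rewrite /rho G_rec addn0 e /r0 addnS !exprS exprD.
by field; rewrite hbj -exprD -exprS hd2 G_n0_neq0.
Qed.

Lemma G_j1 m n : G b m 1 n = (1 - b ^+ (m + n).+1) / (b - 1).
Proof.
have hb1 : b - 1 != 0 by have := b_not_root (isT : (0 < 1)%N); rewrite expr1.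
elim: n => [|n IH].
  have := G_n0_succ m 0; rewrite G_j0 expr1 addn0 => e.
  by apply: (mulIf hb1); rewrite e mulfVK //; ring.
rewrite G_rec IH G_j0 addnS addn0 exprS [in RHS]addnS !exprS.
by field.
Qed.

Lemma G_j1_neq0 m n : G b m 1 n != 0.
Proof.
have hb1 : b - 1 != 0 by have := b_not_root (isT : (0 < 1)%N); rewrite expr1.
by rewrite G_j1 mulf_neq0 ?invr_eq0 // -oppr_eq0 opprB b_not_root.
Qed.

Lemma rho_j1 m n : rho b m 1 n = r0 b (m + n) 1.
Proof.
have hb1 : b - 1 != 0 by have := b_not_root (isT : (0 < 1)%N); rewrite expr1.
have h1 : 1 - b ^+ (m + n).+1 != 0 by rewrite -oppr_eq0 opprB b_not_root.
rewrite /rho !G_j1 /r0 addnS addn1 exprS.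
by field; rewrite hb1 h1 b_not_root.
Qed.

Lemma rho_rec m j n :
  G b m j n != 0 -> G b m j.+1 n != 0 -> G b m j.+1 n.+1 != 0 ->
  rho b m j.+1 n.+1 = 1 + b * rho b m j n * (rho b m j.+1 n - 1) / rho b m j.+1 n.
Proof.
move=> hC hA hB; rewrite /rho.
have eA : G b m j.+1 n = G b m j.+1 n.+1 + b ^+ (m + j.+1 + n) * G b m j n.
  by rewrite G_rec subrK.
rewrite (G_rec m j n.+1); move: hA; rewrite eA => hA.
by rewrite addnS exprS; field; rewrite hC hA hB.
Qed.

End Recurrence.

Definition separated (P : bool) (r : rat) : Prop := if P then 2 < r else r < -1.

Lemma separated_norm P r : separated P r -> 1 < `|r|.
Proof.
by rewrite /separated; case: P => h; [rewrite gtr0_norm | rewrite ltr0_norm]; lra.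
Qed.

Lemma separated_step (Q r' r : rat) (P' P : bool) : 2 <= Q ->
  separated P' r' -> separated P r ->
  separated (~~ P') (1 + (- Q) * r' * (r - 1) / r).
Proof.
move=> hQ hr' hr.
have hr0 : r != 0 by apply/eqP => e; move: hr; rewrite e /separated; case: P; lra.
have ht : r * r^-1 = 1 by rewrite mulfV.
have hf : 1/2 < (r - 1) / r.
  rewrite mulrBl mulfV //; move: hr; rewrite /separated; case: P => hr.
    have : 0 < r^-1 by rewrite invr_gt0; lra.
    nra.
  have : r^-1 < 0 by rewrite invr_lt0; lra.
  nra.
set f := (r - 1) / r in hf *; rewrite -mulrA -/f mulNr; clearbody f.
move: hr'; rewrite /separated; case: P' => /= hr'.
- have h1 : 4 < Q * r' by nra.
  have : 2 < (Q * r') * f by nra.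
  lra.
- have h1 : 2 <= - (Q * r') by nra.
  have : 1 < (- (Q * r')) * f by nra.
  lra.
Qed.

(* The ratio at [n = 1], given the ratios at [n = 0] for [j] and [j + 1]. *)
Lemma ratio_one_gt2 (Q r' r : rat) : 0 < Q -> Q * r' <= -1 -> r < 0 ->
  2 < 1 + (- Q) * r' * (r - 1) / r.
Proof.
move=> hQ h1 hr.
have ht : r * r^-1 = 1 by rewrite mulfV //; apply/eqP; lra.
have hi : r^-1 < 0 by rewrite invr_lt0.
have -> : 1 + (- Q) * r' * (r - 1) / r = 1 + (- (Q * r')) * (1 - r^-1).
  by rewrite mulNr -mulrA mulrBl ht; ring.
nra.
Qed.

Lemma ratio_prod_gt1 (Q r' r : rat) : 0 < Q -> r' < 0 -> r < 0 ->
  (Q * r' <= -1 \/ r <= -1) -> 1 < `|r * (1 + (- Q) * r' * (r - 1) / r)|.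
Proof.
move=> hQ h1 hr hh.
have -> : r * (1 + (- Q) * r' * (r - 1) / r) = r + (- (Q * r')) * (r - 1).
  by field; apply/eqP; lra.
have hs : 0 < - (Q * r') by nra.
rewrite ler0_norm; last nra.
by case: hh => hh; nra.
Qed.

Lemma ratio_pos_value (r A P : rat) : (r < 0 \/ 1 < r) -> 0 < P -> r * A = A + P ->
  0 < r * A.
Proof. by move=> hr hP e; case: hr => hr; nra. Qed.

(* The sign pattern of the ratios [rho (- Q) m j n] for [j >= 1]: positive
   exactly when [n < j] and [n] is odd, or [n >= j] and [j] is even. *)
Definition ratio_pos (j n : nat) : bool := if (j <= n)%N then ~~ odd j else odd n.

Lemma ratio_posS j n : ratio_pos j.+1 n.+1 = ~~ ratio_pos j n.
Proof. by rewrite /ratio_pos ltnS; case: (j <= n)%N => //=; rewrite negbK. Qed.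

Lemma ratio_pos_tail j n : (j <= n.+1)%N -> ratio_pos j n = ~~ odd j.
Proof.
move=> hj; rewrite /ratio_pos; case: (leqP j n) => // hnj.
have -> : j = n.+1 by lia.
by rewrite /= negbK.
Qed.

Lemma div_neg_pos (a c : rat) : a < 0 -> 0 < c -> a / c < 0.
Proof. by move=> ha hc; rewrite pmulr_llt0 ?invr_gt0. Qed.

Lemma div_pos_neg (a c : rat) : 0 < a -> c < 0 -> a / c < 0.
Proof. by move=> ha hc; rewrite pmulr_rlt0 ?invr_lt0. Qed.

(* The base [b = - Q], where [Q >= 2] is [2] or at least [3] (as is any
   integer [q >= 2]).  Writing [r0 (- Q) m j = 1 - Q + eps m j], the
   correction [eps m j] is small, so [r0] is negative and mostly below [-1];
   the only delicate case is [Q = 2], [j = 2]. *)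
Section NegativeBase.
Variable Q : rat.
Hypothesis Q_ge2 : 2 <= Q.
Hypothesis Q_2_or_ge3 : Q = 2 \/ 3 <= Q.
Local Notation b := (- Q).

Lemma Qpow_gt0 k : 0 < Q ^+ k.
Proof. by apply: exprn_gt0; have := Q_ge2; lra. Qed.

Lemma Qpow_le l k : (l <= k)%N -> Q ^+ l <= Q ^+ k.
Proof. by move=> h; apply: ler_weXn2l => //; have := Q_ge2; lra. Qed.

Lemma Qpow_ge1 k : 1 <= Q ^+ k.
Proof. by have := Qpow_le (leq0n k); rewrite expr0. Qed.

Lemma Qpow_geQ k : (0 < k)%N -> Q <= Q ^+ k.
Proof. by move=> h; have := Qpow_le h; rewrite expr1. Qed.

Lemma Qpow_geQ3 k : (2 < k)%N -> Q * Q * Q <= Q ^+ k.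
Proof. by move=> h; have := Qpow_le h; rewrite !exprS expr0 mulr1 mulrA. Qed.

Lemma negQ_pow_odd k : odd k -> (- Q) ^+ k = - Q ^+ k.
Proof. by move=> h; rewrite exprNn -signr_odd h expr1 mulN1r. Qed.

Lemma negQ_pow_even k : ~~ odd k -> (- Q) ^+ k = Q ^+ k.
Proof. by move=> h; rewrite exprNn -signr_odd (negbTE h) expr0 mul1r. Qed.

Lemma norm_negQ_pow k : `|(- Q) ^+ k| = Q ^+ k.
Proof. by rewrite normrX normrN ger0_norm //; have := Q_ge2; lra. Qed.

Lemma negQ_not_root t : (0 < t)%N -> (- Q) ^+ t - 1 != 0.
Proof.
move=> ht; have hQ := Q_ge2; have h := Qpow_geQ ht.
by case: (boolP (odd t)) => o;
  [rewrite negQ_pow_odd // | rewrite negQ_pow_even //]; apply/eqP; lra.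
Qed.

Lemma negQ_neq0 : - Q != 0.
Proof. by rewrite oppr_eq0; apply/eqP; have := Q_ge2; lra. Qed.

(* The deviation of [r0 (- Q) m j] from [1 - Q] (lemma [r0_eps]). *)
Definition eps (m j : nat) : rat :=
  Q * ((- Q) ^+ m - 1) / ((- Q) ^+ m * (- Q) ^+ j - 1).

Lemma r0_eps m j : (0 < j)%N -> r0 (- Q) m j = 1 - Q + eps m j.
Proof.
move=> hj; have hd : (- Q) ^+ m * (- Q) ^+ j - 1 != 0.
  by rewrite -exprD; apply: negQ_not_root; lia.
by rewrite /r0 /eps exprS exprD; field.
Qed.

Lemma eps_m0 j : eps 0 j = 0.
Proof. by rewrite /eps expr0 subrr mulr0 mul0r. Qed.

Lemma eps_le m j c : (0 < j)%N -> 0 <= c ->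
  Q * (Q ^+ m + 1) <= c * (Q ^+ m * Q ^+ j - 1) -> `|eps m j| <= c.
Proof.
move=> hj hc hh; have hQ := Q_ge2; rewrite /eps.
have hy1 := Qpow_ge1 m; have hzQ := Qpow_geQ hj.
have hyz : 2 <= Q ^+ m * Q ^+ j by nra.
have hden : Q ^+ m * Q ^+ j - 1 <= `|(- Q) ^+ m * (- Q) ^+ j - 1|.
  by have := lerB_dist ((- Q) ^+ m * (- Q) ^+ j) 1; rewrite normrM !norm_negQ_pow normr1.
have hnum : `|(- Q) ^+ m - 1| <= Q ^+ m + 1.
  by have := ler_normB ((- Q) ^+ m) 1; rewrite norm_negQ_pow normr1.
rewrite normrM normfV normrM (ger0_norm (x := Q)); last lra.
have hp : 0 < `|(- Q) ^+ m * (- Q) ^+ j - 1| by lra.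
rewrite ler_pdivrMr //.
have h0 : 0 <= `|(- Q) ^+ m - 1| by apply: normr_ge0.
nra.
Qed.

Lemma eps_half m j : (0 < m)%N -> ((2 < j)%N \/ (j = 2%N /\ 3 <= Q)) ->
  `|eps m j| <= 1/2.
Proof.
move=> hm hj; have hQ := Q_ge2; have hy := Qpow_geQ hm.
have hj0 : (0 < j)%N by case: hj => [|[->]] //; lia.
apply: eps_le => //; set y := Q ^+ m in hy *.
case: hj => [hj|[-> hQ3]].
  have hz := Qpow_geQ3 hj; set z := Q ^+ j in hz *.
  have h1 : 4 * Q <= Q * Q * Q by nra.
  have h2 : 4 * Q * y <= y * z by nra.
  nra.
rewrite expr2.
have hQy : 0 <= Q * y by nra.
have h2 : 3 * Q * y <= y * (Q * Q) by nra.
have h3 : Q * Q <= Q * y by nra.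
have h4 : 3 * Q <= Q * Q by nra.
nra.
Qed.

(* For odd [j], numerator and denominator of [eps] have opposite signs. *)
Lemma eps_neg m j : (0 < m)%N -> odd j -> eps m j < 0.
Proof.
move=> hm hj; have hQ := Q_ge2; rewrite /eps (negQ_pow_odd hj).
have hy := Qpow_geQ hm; have hz := Qpow_geQ (odd_gt0 hj).
case: (boolP (odd m)) => om; [rewrite (negQ_pow_odd om) | rewrite (negQ_pow_even om)];
  set y := Q ^+ m in hy *; set z := Q ^+ j in hz *.
  by apply: div_neg_pos; nra.
by apply: div_pos_neg; nra.
Qed.

Lemma eps_Q2_j2 m : Q = 2 -> (0 < m)%N ->
  eps m 2 < 1 /\ (~~ odd m -> eps m 2 <= 1/2).
Proof.
move=> e2 hm; have hQ := Q_ge2; have hy := Qpow_geQ hm; rewrite /eps (negQ_pow_even (k := 2)) // expr2.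
case: (boolP (odd m)) => om; [rewrite (negQ_pow_odd om) | rewrite (negQ_pow_even om)];
  set y := Q ^+ m in hy *; rewrite e2 in hy *.
  split => //; have hd : 0 < 4 * y + 1 by lra.
  have -> : 2 * (- y - 1) / (- y * (2 * 2) - 1) = 2 * (y + 1) / (4 * y + 1).
    by field; apply/andP; split; apply/eqP; lra.
  by rewrite ltr_pdivrMr //; lra.
have hd : 0 < y * (2 * 2) - 1 by lra.
by split; [rewrite ltr_pdivrMr // | move=> _; rewrite ler_pdivrMr //]; lra.
Qed.

Lemma eps_cases m j : (0 < j)%N ->
  [\/ m = 0%N, (0 < m)%N /\ odd j,
      (0 < m)%N /\ `|eps m j| <= 1/2 /\ (3 <= Q \/ ~~ odd j)
    | [/\ (0 < m)%N, Q = 2 & j = 2%N]].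
Proof.
move=> hj; case: m => [|m]; first by constructor 1.
case: (boolP (odd j)) => oj; first by constructor 2.
have hj2 : (2 <= j)%N by move: hj oj; case: j => [|[|j]].
case: (ltngtP j 2) => h; first lia.
  by constructor 3; split => //; split; [apply: eps_half => //; left | right].
case: Q_2_or_ge3 => hQ3; first by constructor 4.
by constructor 3; split => //; split; [apply: eps_half => //; right | left].
Qed.

Lemma r0_neg m j : (0 < j)%N -> r0 (- Q) m j < 0.
Proof.
move=> hj; have hQ := Q_ge2; rewrite r0_eps //.
case: (eps_cases m hj) => [->|[hm oj]|[hm [he _]]|[hm e2 ->]].
- by rewrite eps_m0; lra.
- by have := eps_neg hm oj; lra.
- by have := ler_norm (eps m j); lra.
- by have [h _] := eps_Q2_j2 e2 hm; lra.
Qed.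

Lemma r0_Q m j : (0 < j)%N ->
  Q * r0 (- Q) m j <= -1 \/ [/\ Q = 2, j = 2%N & odd m].
Proof.
move=> hj; have hQ := Q_ge2; rewrite r0_eps //.
case: (eps_cases m hj) => [->|[hm oj]|[hm [he _]]|[hm e2 ej]].
- by left; rewrite eps_m0; nra.
- by left; have := eps_neg hm oj; nra.
- by left; have := ler_norm (eps m j); nra.
- subst j; case: (boolP (odd m)) => om; first by right.
  by left; have [_ h] := eps_Q2_j2 e2 hm; have := h om; rewrite e2; lra.
Qed.

Lemma r0_lt m j : (0 < j)%N -> (3 <= Q \/ (0 < m)%N /\ odd j) -> r0 (- Q) m j < -1.
Proof.
move=> hj hh; have hQ := Q_ge2; rewrite r0_eps //.
case: hh => [hQ3|[hm oj]]; last by have := eps_neg hm oj; lra.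
case: (eps_cases m hj) => [->|[hm oj]|[hm [he _]]|[hm e2 ej]].
- by rewrite eps_m0; lra.
- by have := eps_neg hm oj; lra.
- by have := ler_norm (eps m j); lra.
- lra.
Qed.

(* The exceptional case [Q = 2], [j = 2], [m] odd of [r0_Q], handled by
   explicit computation. *)
Lemma r0_special m : Q = 2 -> odd m ->
  r0 (- Q) m 3 <= -1 /\
  2 < 1 + (- Q) * r0 (- Q) m 2 * (r0 (- Q) m 3 - 1) / r0 (- Q) m 3.
Proof.
move=> e2 om; have hQ := Q_ge2; have hm : (0 < m)%N by apply: odd_gt0.
have h3 := eps_neg hm (isT : odd 3).
split; first by rewrite r0_eps //; lra.
have hy := Qpow_geQ hm.
rewrite !r0_eps // /eps (negQ_pow_odd om) (negQ_pow_odd (k := 3)) // (negQ_pow_even (k := 2)) //.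
set y := Q ^+ m in hy *; rewrite e2 in hy *.
have -> : (2 : rat) ^+ 3 = 8 by rewrite !exprS expr0; lra.
have -> : (2 : rat) ^+ 2 = 4 by rewrite !exprS expr0; lra.
have -> : 1 - 2 + 2 * (- y - 1) / (- y * 4 - 1) = (1 - 2 * y) / (4 * y + 1).
  by field; repeat (apply/andP; split); apply/eqP; lra.
have -> : 1 - 2 + 2 * (- y - 1) / (- y * - 8 - 1) = - (10 * y + 1) / (8 * y - 1).
  by field; repeat (apply/andP; split); apply/eqP; lra.
have -> : - 2 * ((1 - 2 * y) / (4 * y + 1)) * (- (10 * y + 1) / (8 * y - 1) - 1)
            / (- (10 * y + 1) / (8 * y - 1))
          = 36 * y * (2 * y - 1) / ((4 * y + 1) * (10 * y + 1)).
  by field; repeat (apply/andP; split); apply/eqP; lra.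
have hd : 0 < (4 * y + 1) * (10 * y + 1) by nra.
suff : 1 < 36 * y * (2 * y - 1) / ((4 * y + 1) * (10 * y + 1)) by lra.
by rewrite ltr_pdivlMr //; nra.
Qed.

Let b_not_root := negQ_not_root.
Let b_neq0 := negQ_neq0.

Lemma G_n1_neq0 m j : G b m j.+1 1 != 0.
Proof.
have hr := r0_neg m (isT : (0 < j.+1)%N).
rewrite (G_succ (G_n0_neq0 b_not_root b_neq0 m j.+1)) rho_n0 //.
by rewrite mulf_neq0 ?G_n0_neq0 //; apply/eqP; lra.
Qed.

Lemma rho_n1 m j :
  rho b m j.+2 1 = 1 + b * r0 b m j.+1 * (r0 b m j.+2 - 1) / r0 b m j.+2.
Proof.
have hC := G_n0_neq0 b_not_root b_neq0 m j.+1.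
have hA := G_n0_neq0 b_not_root b_neq0 m j.+2.
by rewrite (rho_rec b_not_root b_neq0 hC hA (G_n1_neq0 m j.+1)) !rho_n0.
Qed.

Lemma rho_n1_gt2 m j : 2 < rho b m j.+2 1.
Proof.
have hQ := Q_ge2; rewrite rho_n1.
case: (r0_Q m (isT : (0 < j.+1)%N)) => [hQr|[eQ ej om]].
  by apply: ratio_one_gt2 => //; [lra | apply: r0_neg].
have -> : j.+2 = 3%N by lia.
by rewrite ej; have [_ h] := r0_special eQ om.
Qed.

Lemma ratio_separated m j n :
  G b m j.+1 n.+1 != 0 /\ separated (ratio_pos j.+1 n.+1) (rho b m j.+1 n.+1).
Proof.
elim: j n => [|j IHj] n.
  split; first exact: G_j1_neq0.
  rewrite /separated /ratio_pos /= rho_j1 //.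
  by apply: r0_lt => //; right; split => //; lia.
elim: n => [|n IHn]; first by split; [apply: G_n1_neq0 | apply: rho_n1_gt2].
have [hC sC] := IHj n; have [hA sA] := IHn.
have hB : G b m j.+2 n.+2 != 0.
  rewrite (G_succ hA) mulf_neq0 // -normr_gt0.
  by have := separated_norm sA; lra.
split => //; rewrite (rho_rec b_not_root b_neq0 hC hA hB) ratio_posS.
exact: (separated_step Q_ge2 sC sA).
Qed.

(* The sign of every ratio, including [n = 0] where [rho = r0 < 0]. *)
Lemma rho_sign m j n : G b m j.+1 n != 0 /\
  (if ratio_pos j.+1 n then 2 < rho b m j.+1 n else rho b m j.+1 n < 0).
Proof.
case: n => [|n].
  rewrite /ratio_pos /= rho_n0 //.
  by split; [apply: G_n0_neq0 | apply: r0_neg].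
have [hG s] := ratio_separated m j n; split => //.
by move: s; rewrite /separated; case: ratio_pos => //; lra.
Qed.

Lemma G_abs_step m j n : (0 < j)%N -> (0 < n)%N -> `|G b m j n| < `|G b m j n.+1|.
Proof.
case: j => // j _; case: n => // n _.
have [hG s] := ratio_separated m j n.
by rewrite (G_succ hG) [ltRHS]normrM ltr_pMl ?normr_gt0 //; apply: separated_norm s.
Qed.

Lemma G_abs_lt m j n n' : (0 < j)%N -> (0 < n)%N -> (n < n')%N ->
  `|G b m j n| < `|G b m j n'|.
Proof.
move=> hj hn; elim: n' => // n' IH; rewrite ltnS leq_eqVlt => /predU1P[<-|h].
  exact: G_abs_step.
by apply: lt_trans (IH h) (G_abs_step _ hj _); apply: leq_trans hn (ltnW h).
Qed.

Lemma G_abs_01 m j : (0 < j)%N -> (3 <= Q \/ (0 < m)%N /\ odd j) ->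
  `|G b m j 0| < `|G b m j 1|.
Proof.
case: j => // j _ hcase.
have hG := G_n0_neq0 b_not_root b_neq0 m j.+1.
rewrite (G_succ hG) rho_n0 // [ltRHS]normrM ltr_pMl ?normr_gt0 //.
have hr := r0_lt (isT : (0 < j.+1)%N) hcase.
by rewrite ltr0_norm; lra.
Qed.

Lemma G_abs_02 m j : (1 < j)%N -> `|G b m j 0| < `|G b m j 2|.
Proof.
case: j => [|[|j]] // _; have hQ := Q_ge2.
have hG := G_n0_neq0 b_not_root b_neq0 m j.+2.
have hr' := r0_neg m (isT : (0 < j.+1)%N).
have hr := r0_neg m (isT : (0 < j.+2)%N).
rewrite (G_succ (G_n1_neq0 m j.+1)) rho_n1 (G_succ hG) rho_n0 // mulrA [ltRHS]normrM.
rewrite ltr_pMl ?normr_gt0 // mulrC; apply: ratio_prod_gt1 => //; first lra.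
case: (r0_Q m (isT : (0 < j.+1)%N)) => [|[eQ ej om]]; first by left.
have -> : j.+2 = 3%N by lia.
by right; have [] := r0_special eQ om.
Qed.

Lemma G_abs_increasing m j n n' : (0 < j)%N -> (1 < j)%N \/ (0 < m)%N ->
  (n < n')%N -> (1 < n')%N -> `|G b m j n| < `|G b m j n'|.
Proof.
move=> hj hjm hnn' hn'; case: (posnP n) => [->|hn]; last exact: G_abs_lt.
have h2 : `|G b m j 0| < `|G b m j 2|.
  case: (ltnP 1 j) => hj1; first exact: G_abs_02.
  have ej : j = 1%N by lia.
  have h01 : `|G b m j 0| < `|G b m j 1|.
    by apply: G_abs_01 => //; right; split; [case: hjm; lia | rewrite ej].
  exact: lt_trans h01 (G_abs_step m hj (isT : (0 < 1)%N)).
move: hn'; rewrite leq_eqVlt => /predU1P[<- //|hn'].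
exact: lt_trans h2 (G_abs_lt m hj (isT : (0 < 2)%N) hn').
Qed.

Lemma G_sign_step m j n : (0 < j)%N ->
  (0 < G b m j n.+1 * G b m j n) = ratio_pos j n.
Proof.
case: j => // j _; have [hG s] := rho_sign m j n.
have hGG : 0 < G b m j.+1 n * G b m j.+1 n by rewrite -expr2 exprn_even_gt0.
rewrite (G_succ hG) -mulrA pmulr_lgt0 //.
by case: ratio_pos s => s; apply/idP/idP => //; lra.
Qed.

(* [G] is positive at [n = m + j], that is, the degree [Q_j(0)] is positive. *)
Lemma G_top_pos m j : 0 < G b m j (m + j).
Proof.
elim: j => [|j IH]; first by rewrite G_j0.
have [hA s] := rho_sign m j (m + j).
have hr : rho b m j.+1 (m + j) < 0 \/ 1 < rho b m j.+1 (m + j).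
  by case: ratio_pos s => s; [right | left]; lra.
have hodd : odd (m + j.+1 + (m + j)).
  by rewrite addnS addSn addnn /= odd_double.
have hP : 0 < - (b ^+ (m + j.+1 + (m + j)) * G b m j (m + j)).
  by rewrite negQ_pow_odd // mulNr opprK; apply: mulr_gt0 (Qpow_gt0 _) IH.
rewrite addnS (G_succ hA); apply: ratio_pos_value hr hP _.
by rewrite -(G_succ hA) (G_rec b_not_root b_neq0) addnS.
Qed.

Lemma G_pos_down m j k n : (0 < j)%N -> (forall t, (k <= t)%N -> ratio_pos j t) ->
  (k <= n <= m + j)%N -> 0 < G b m j n.
Proof.
move=> hj hpos /andP[hkn hnN].
suff h : forall t, (t <= m + j - k)%N -> 0 < G b m j (m + j - t).
  by have := h (m + j - n)%N; rewrite subKn //; apply; lia.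
elim=> [_|t IH ht]; first by rewrite subn0 G_top_pos.
have e : (m + j - t = (m + j - t.+1).+1)%N by lia.
have := G_sign_step m (m + j - t.+1) hj; rewrite hpos; last by lia.
by rewrite -e pmulr_rgt0 //; apply: IH; lia.
Qed.

End NegativeBase.

Lemma nonpos_le_of_norm (x y : rat) : x <= 0 -> `|y| <= `|x| -> x <= y.
Proof.
move=> hx; rewrite (ler0_norm hx).
by have := ler_norm (- y); rewrite normrN; lra.
Qed.

Section Eigenvalues.
Variables q d j : nat.
Hypothesis q_ge2 : (2 <= q)%N.
Hypothesis d_ge3 : (3 <= d)%N.
Hypothesis j_gt0 : (0 < j)%N.
Hypothesis j_le_d : (j <= d)%N.

Let Q : rat := q%:R.

Let Q_ge2 : 2 <= Q.
Proof. by rewrite /Q (ler_nat _ 2 q). Qed.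

Let Q_2_or_ge3 : Q = 2 \/ 3 <= Q.
Proof.
case: (ltngtP q 2) => h; first lia.
  by right; rewrite /Q (ler_nat _ 3 q).
by left; rewrite /Q h.
Qed.

Let QeigE i : Qeig q d j i = G (- Q) (d - j) j (d - i).
Proof. exact: Qeig_G. Qed.

(* (i): [|Q_j(i)|] strictly decreases, with one possible exception at the
   last step, where [Q_j(d) = G 0] needs the extra hypothesis of [G_abs_01]. *)
Lemma eig_abs_decreasing i : (i <= d - 1)%N ->
  ~ [/\ q = 2%N, i = (d - 1)%N & (j = d \/ ~~ odd j)] ->
  `|Qeig q d j i.+1| < `|Qeig q d j i|.
Proof.
move=> hi hex; rewrite !QeigE.
have -> : (d - i = (d - i.+1).+1)%N by lia.
case: (posnP (d - i.+1)) => [hn0|hn]; last exact: G_abs_step.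
rewrite hn0; apply: G_abs_01 => //.
case: (eqVneq q 2) => [e2|ne2]; last by left; rewrite /Q (ler_nat _ 3 q); lia.
have ei : i = (d - 1)%N by lia.
case: (boolP (odd j)) => oj; last by exfalso; apply: hex; split => //; right.
case: (ltnP j d) => hjd; last by exfalso; apply: hex; split => //; left; lia.
by right; split => //; lia.
Qed.

Lemma eig_abs_max i : (2 <= i)%N -> (i <= d)%N ->
  `|Qeig q d j i| < `|Qeig q d j 1|.
Proof.
move=> hi2 hid; rewrite !QeigE.
by apply: G_abs_increasing => //; lia.
Qed.

(* (ii): for odd [j], [Q_j(1)] is nonpositive (the ratio from [Q_j(1)] to
   [Q_j(0) > 0] is negative), hence minimal by (iv). *)
Lemma eig_min_odd : odd j -> forall i, (i <= d)%N -> Qeig q d j 1 <= Qeig q d j i.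
Proof.
move=> oj i hid.
have top_pos : 0 < G (- Q) (d - j) j d.
  by have := G_top_pos Q_ge2 Q_2_or_ge3 (d - j) j; rewrite subnK.
have neg1 : Qeig q d j 1 <= 0.
  have := G_sign_step Q_ge2 Q_2_or_ge3 (d - j) (d - 1) j_gt0.
  rewrite ratio_pos_tail ?oj; last by lia.
  have -> : (d - 1).+1 = d by lia.
  by rewrite pmulr_rgt0 // QeigE => /negbT; rewrite -leNgt.
case: (ltnP 1 i) => hi.
  by apply: nonpos_le_of_norm => //; apply: ltW; apply: eig_abs_max.
case: i hid hi => [|[|]] // _ _.
by apply: le_trans neg1 _; apply: ltW; rewrite QeigE subn0.
Qed.

(* (iii): for even [j], [Q_j(i)] is positive for [i <= d - j + 1] and
   [Q_j(d - j + 2)] is nonpositive, of the largest absolute value among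
   [Q_j(i)] with [i >= d - j + 2]. *)
Lemma eig_min_even : ~~ odd j -> forall i, (i <= d)%N ->
  Qeig q d j (d - j + 2) <= Qeig q d j i.
Proof.
move=> ej i hid.
have hj2 : (2 <= j)%N by move: ej j_gt0; case: j => [|[|]].
have tail_pos : forall n, (j.-1 <= n <= d)%N -> 0 < G (- Q) (d - j) j n.
  move=> n hn; apply: (G_pos_down Q_ge2 Q_2_or_ge3 (k := j.-1)) => //.
    by move=> t ht; rewrite ratio_pos_tail ?ej //; lia.
  by rewrite subnK.
have nonpos : G (- Q) (d - j) j (j - 2) <= 0.
  have := G_sign_step Q_ge2 Q_2_or_ge3 (d - j) (j - 2) j_gt0.
  rewrite /ratio_pos ifF; last by apply/negbTE; rewrite -ltnNge; lia.
  rewrite oddB // (negbTE ej) /=.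
  have -> : (j - 2).+1 = j.-1 by lia.
  have hpos : 0 < G (- Q) (d - j) j j.-1 by apply: tail_pos; lia.
  by rewrite pmulr_rgt0 // => /negbT; rewrite -leNgt.
rewrite !QeigE; have -> : (d - (d - j + 2) = j - 2)%N by lia.
case: (leqP j.-1 (d - i)) => hn.
  by apply: le_trans nonpos _; apply: ltW; apply: tail_pos; lia.
apply: nonpos_le_of_norm => //.
case: (ltngtP (d - i) (j - 2)) => hn2; [| lia | by rewrite hn2].
apply: ltW; apply: G_abs_increasing => //; first by left.
have : j != 3%N by apply: contraNneq ej => ->.
lia.
Qed.

End Eigenvalues.

Theorem theorem5p10 (q d j : nat) :
  prime_power q -> (2 <= q)%N -> (6 <= d)%N -> (1 <= j)%N -> (j <= d)%N ->
  (* (i) *)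
  (forall i : nat, (i <= d - 1)%N ->
     ~ [/\ q = 2%N, i = (d - 1)%N & (j = d \/ ~~ odd j)] ->
     `|Qeig q d j (i.+1)| < `|Qeig q d j i|) /\
  (* (ii) *)
  (odd j -> forall i : nat, (i <= d)%N -> Qeig q d j 1 <= Qeig q d j i) /\
  (* (iii) *)
  (~~ odd j -> forall i : nat, (i <= d)%N ->
     Qeig q d j (d - j + 2) <= Qeig q d j i) /\
  (* (iv) *)
  (forall i : nat, (2 <= i)%N -> (i <= d)%N ->
     `|Qeig q d j i| < `|Qeig q d j 1|).
Proof.
move=> _ hq hd hj hjd; have hd3 : (3 <= d)%N by lia.
split; first exact: eig_abs_decreasing.
split; first exact: eig_min_odd.
split; first exact: eig_min_even.
exact: eig_abs_max.
Qed.
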